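(* Let $t$ be an integer, $G$ a finite graph and $(T,Q,\alpha,\beta,R)$ an NLC-decomposition of $G$ with $|Q|\le t$. Let $y$ be a non-root node of $T$, let $p$ be its parent, and let $C=V(T_{y\mid p})\cap V(G)$ and $D=V(T_{p\mid y})\cap V(G)$. For every $q\in Q$ let $U_q=\{u\in C:\beta(\{y,u\})(\alpha(u))=q\}$. Then $(U_q)_{q\in Q}$ is a $D$-twin partition of $C$.
   Context: An NLC-decomposition of $G$ is a tuple $(T,Q,\alpha,\beta,R)$ where $T$ is a rooted binary tree (each node has at most one left child and at most one right child) whose leaf set is $V(G)$, $Q$ is a finite set of labels, $\alpha:V(G)\to Q$, $\beta$ assigns to each 2-element subset of $V(T)$ a function $Q\to Q$, and $R$ assigns to each node a subset of $Q\times Q$, such that: (nlc1) for distinct $u,v$ with $u$ an ancestor of $v$ and $u=u_0,u_1,\dots,u_n=v$ the $u$-$v$ path in $T$, $\beta(\{u_0,u_1\})\circ\cdots\circ\beta(\{u_{n-1},u_n\})=\beta(\{u,v\})$; (nlc2) for distinct $x,y\in V(G)$ with lowest common ancestor $u$, $x$ a descendant of the left child and $y$ of the right child of $u$: $xy\in E(G)$ iff $(\beta(\{u,x\})(\alpha(x)),\beta(\{u,y\})(\alpha(y)))\in R(u)$. Convention: $\beta(\{u,u\})$ is the identity map on $Q$. For an edge $ab$ of $T$, $T_{a\mid b}$ is the component of $a$ in $T-ab$. For a partition $\{C,D\}$ of $V(G)$, a $D$-twin partition of $C$ is a partition of $C$ (parts may be empty) such that any two vertices in a common part have the same neighbourhood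 in $D$. *)

From mathcomp Require Import all_boot.
Set Implicit Arguments. Unset Strict Implicit. Unset Printing Implicit Defensive.

(* A rooted binary tree on the finite node type N is given by a root [r],
   a parent map [par] (with [par r = r]) and a side map [side]
   ([true] = left child, [false] = right child). *)
Definition rooted_binary_tree (N : finType) (r : N) (par : N -> N)
  (side : N -> bool) : Prop :=
  [/\ par r = r,
      (forall v, exists k, iter k par v = r) &
      (forall c1 c2, c1 != r -> c2 != r -> par c1 = par c2 ->
         side c1 = side c2 -> c1 = c2)].

Definition is_child (N : finType) (r : N) (par : N -> N) (c u : N) : bool :=
  (c != r) && (par c == u).

Definition is_leaf (N : finType) (r : N) (par : N -> N) (u : N) : bool :=
  [forall c, ~~ is_child r par c u].

Definition descendant (N : finType) (par : N -> N) (x u : N) : Prop :=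
  exists k, iter k par x = u.

(* beta on pairs, with the convention beta({u,u}) = id *)
Definition bt (N Q : finType) (beta : N -> N -> Q -> Q) (u v : N) : Q -> Q :=
  if u == v then id else beta u v.

(* composition beta{u0,u1} o ... o beta{u_{k-1},u_k} along the path
   u0 = iter k par v, ..., u_k = v *)
Fixpoint pathcomp (N Q : finType) (par : N -> N) (beta : N -> N -> Q -> Q)
  (k : nat) (v : N) : Q -> Q :=
  match k with
  | 0 => id
  | k'.+1 => fun q => pathcomp par beta k' (par v) (bt beta (par v) v q)
  end.

Definition NLC_decomposition (N Q : finType) (VG : {set N}) (E : rel N)
  (r : N) (par : N -> N) (side : N -> bool) (alpha : N -> Q)
  (beta : N -> N -> Q -> Q) (R : N -> rel Q) : Prop :=
  [/\ rooted_binary_tree r par side,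
      (forall u, is_leaf r par u = (u \in VG)),
      (* beta is indexed by 2-element subsets *)
      (forall u v, beta u v = beta v u),
      (forall v k, 0 < k -> uniq (traject par v k.+1) ->
         pathcomp par beta k v =1 bt beta (iter k par v) v) &
      (forall x y u cl cr, x \in VG -> y \in VG -> x != y ->
         is_child r par cl u -> is_child r par cr u ->
         side cl = true -> side cr = false ->
         descendant par x cl -> descendant par y cr ->
         E x y = R u (bt beta u x (alpha x)) (bt beta u y (alpha y)))].

Definition tadj (N : finType) (par : N -> N) : rel N :=
  fun u v => (u != v) && ((par u == v) || (par v == u)).

(* T_{a|b}: component of a in T - ab *)
Definition comp_minus_edge (N : finType) (par : N -> N) (a b : N) : {set N} :=
  [set z | connect (fun u v => tadj par u v && ([set u; v] != [set a; b])) a z].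

(* (U q)_q is a D-twin partition of C (parts may be empty) *)
Definition twin_partition (N Q : finType) (E : rel N) (C D : {set N})
  (U : Q -> {set N}) : Prop :=
  [/\ \bigcup_(q : Q) U q = C,
      (forall q q', q != q' -> [disjoint U q & U q']) &
      (forall q u v, u \in U q -> v \in U q ->
         forall d, d \in D -> E u d = E v d)].

From mathcomp Require Import all_boot.
Set Implicit Arguments. Unset Strict Implicit.

(* Let u be a vertex below y and d a vertex outside the subtree of y.  Their
   lowest common ancestor w is the parent of the highest ancestor c1 of y
   that is not an ancestor of d, so it depends on d alone, and u, d lie below the
   two distinct children c1, c2 of w.  By (nlc1) the label of u seen from w is
   beta{w,y} applied to its label seen from y, hence by (nlc2) the adjacency
   of u and d is a function of beta{y,u}(alpha u). *)

Section RootedTree.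

Variables (N : finType) (r : N) (par : N -> N).
Hypothesis par_root : par r = r.
Hypothesis reach_root : forall v, exists k, iter k par v = r.

Lemma iter_par_root m n x : m <= n -> iter m par x = r -> iter n par x = r.
Proof.
move=> /subnK <- xr; rewrite iterD xr.
by elim: (n - m) => //= k ->.
Qed.

Lemma iter_par_cycle j x : 0 < j -> iter j par x = x -> x = r.
Proof.
move=> j_gt0 cyc; have [m xr] := reach_root x.
have iter_mul k : iter (j * k) par x = x.
  by elim: k => [|k IHk]; rewrite ?muln0 // mulnS iterD IHk.
by rewrite -(iter_mul m); apply: iter_par_root xr; rewrite leq_pmull.
Qed.

Lemma uniq_traject_par x n : iter n.-1 par x != r -> uniq (traject par x n.+1).
Proof.
move=> last_nr; apply/(uniqPn x) => -[a [b [lt_ab]]].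
rewrite size_traject => lt_bn; rewrite !nth_traject ?(ltn_trans lt_ab) // => eq_ab.
have a_root : iter a par x = r.
  apply: (iter_par_cycle (j := b - a)); first by rewrite subn_gt0.
  by rewrite -iterD subnK 1?ltnW.
have lt_an : a < n := leq_trans lt_ab lt_bn.
move/eqP: last_nr; apply; apply: iter_par_root a_root.
by rewrite -ltnS prednK // (leq_ltn_trans _ lt_an).
Qed.

Lemma fconnect_par_parent y : y != r -> ~~ fconnect par (par y) y.
Proof.
move=> y_nr; apply: contra y_nr => /iter_findex; rewrite -iterSr.
by move/iter_par_cycle => ->.
Qed.

Lemma comp_minus_edge_fconnect y a b z :
    [set a; b] = [set y; par y] -> z \in comp_minus_edge par a b ->
  fconnect par z y = fconnect par a y.
Proof.
move=> ab; rewrite inE => conn.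
apply/esym/(closed_connect (a := [pred u | fconnect par u y]) _ conn).
have step u : [set u; par u] != [set y; par y] -> fconnect par u y = fconnect par (par u) y.
  by move=> uy; rewrite fconnect_eqVf; case: (u =P y) uy => [-> | //]; rewrite eqxx.
move=> u v /andP[/andP[_ /orP[/eqP <- | /eqP <-]]]; rewrite ab; first exact: step.
by rewrite setUC => /step.
Qed.

Lemma fconnect_child x w :
  fconnect par x w -> x != w -> exists2 c, is_child r par c w & fconnect par x c.
Proof.
move=> xw x_neq_w; have reach_w : exists k, iter k par x == w.
  by exists (findex par x w); rewrite iter_findex.
case: (ex_minnP reach_w) => k /eqP xkw min_k.
have k_gt0 : 0 < k by case: k xkw {min_k} => // /= xw'; rewrite xw' eqxx in x_neq_w.
have par_c : par (iter k.-1 par x) = w by rewrite -iterS prednK.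
exists (iter k.-1 par x); last exact: fconnect_iter.
rewrite /is_child par_c eqxx andbT; apply/eqP => c_root.
have := min_k k.-1; rewrite -par_c c_root par_root eqxx => /(_ isT).
by rewrite leqNgt ltn_predL k_gt0.
Qed.

Lemma branching_ancestor y d : ~~ fconnect par d y ->
  exists w c, [/\ is_child r par c w, fconnect par y c,
                  ~~ fconnect par d c & fconnect par d w].
Proof.
move=> dNy; have reach_anc : exists j, fconnect par d (iter j par y).
  have [m ym] := reach_root y; have [k dk] := reach_root d.
  by exists m; rewrite ym -dk fconnect_iter.
case: (ex_minnP reach_anc) => j d_anc min_j.
have j_gt0 : 0 < j by case: j d_anc {min_j} => // d_y; rewrite d_y in dNy.
have dNc : ~~ fconnect par d (iter j.-1 par y).
  by apply/negP => /min_j; rewrite leqNgt ltn_predL j_gt0.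
have par_c : par (iter j.-1 par y) = iter j par y by rewrite -iterS prednK.
exists (iter j par y), (iter j.-1 par y); split=> //; last exact: fconnect_iter.
rewrite /is_child par_c eqxx andbT; apply: contra dNc => /eqP c_root.
by rewrite c_root -par_root -c_root par_c.
Qed.

End RootedTree.

Lemma pathcompD (N Q : finType) (par : N -> N) (beta : N -> N -> Q -> Q) a b x q :
  pathcomp par beta (a + b) x q = pathcomp par beta b (iter a par x) (pathcomp par beta a x q).
Proof. by elim: a x q => [|a IHa] x q //=; rewrite IHa -iterSr. Qed.

Section NLCPaths.

Variables (N Q : finType) (r : N) (par : N -> N) (beta : N -> N -> Q -> Q).
Hypothesis par_root : par r = r.
Hypothesis reach_root : forall v, exists k, iter k par v = r.
Hypothesis nlc1 : forall v k, 0 < k -> uniq (traject par v k.+1) ->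
  pathcomp par beta k v =1 bt beta (iter k par v) v.

Lemma pathcomp_bt x k :
  (0 < k -> iter k.-1 par x != r) -> pathcomp par beta k x =1 bt beta (iter k par x) x.
Proof.
case: k => [_ q | k /(_ isT) last_nr]; first by rewrite /bt eqxx.
by apply: nlc1; last exact: (uniq_traject_par par_root reach_root).
Qed.

Lemma bt_through x y c k i q : iter k par x = y -> iter i par y = c -> c != r ->
  bt beta (par c) x q = bt beta (par c) y (bt beta y x q).
Proof.
move=> xky yic c_nr; have xc : iter (i + k) par x = c by rewrite iterD xky.
have below_c n : n <= i + k -> iter n par x != r.
  by move=> le_n; apply: contra c_nr => /eqP xr; rewrite -xc (iter_par_root par_root le_n xr).
have par_c : par c = iter (k + i.+1) par x by rewrite addnS iterS addnC xc.
have path_x : pathcomp par beta (k + i.+1) x q = bt beta (par c) x q.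
  by rewrite par_c pathcomp_bt // addnS /= addnC below_c.
have path_k : pathcomp par beta k x q = bt beta y x q.
  by rewrite -xky pathcomp_bt // => _; rewrite below_c // (leq_trans (leq_pred k)) ?leq_addl.
have path_i : pathcomp par beta i.+1 y =1 bt beta (par c) y.
  by rewrite -yic -iterS; apply: pathcomp_bt; rewrite yic.
by rewrite -path_x pathcompD xky path_k path_i.
Qed.

End NLCPaths.

Lemma descendantP (N : finType) (par : N -> N) x u :
  reflect (descendant par x u) (fconnect par x u).
Proof.
apply: (iffP idP) => [/iter_findex xu | [k <-]]; last exact: fconnect_iter.
by exists (findex par x u).
Qed.

Lemma twin_partition_fibres (N Q : finType) (E : rel N) (C D : {set N}) (f : N -> Q) :
    {in C &, forall u v, f u = f v -> {in D, forall d, E u d = E v d}} ->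
  twin_partition E C D (fun q => [set u in C | f u == q]).
Proof.
move=> twins; split.
- apply/setP => u; apply/bigcupP/idP => [[q _] | uC]; first by rewrite inE => /andP[].
  by exists (f u) => //; rewrite inE uC eqxx.
- move=> q q' neq_qq'; rewrite -setI_eq0; apply/eqP/setP => u; rewrite !inE.
  apply/negbTE/negP => /andP[/andP[_ /eqP fq] /andP[_ /eqP fq']].
  by rewrite -fq -fq' eqxx in neq_qq'.
- move=> q u v; rewrite !inE => /andP[uC /eqP fu] /andP[vC /eqP fv].
  by apply: twins; rewrite ?fu ?fv.
Qed.

Lemma nlc_adjacency_through_label (N Q : finType) (VG : {set N}) (E : rel N)
    (r : N) (par : N -> N) (side : N -> bool) (alpha : N -> Q)
    (beta : N -> N -> Q -> Q) (R : N -> rel Q) y d :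
    symmetric E -> NLC_decomposition VG E r par side alpha beta R ->
    d \in VG -> ~~ fconnect par d y ->
  exists F : Q -> bool, forall x, x \in VG -> fconnect par x y ->
    E x d = F (bt beta y x (alpha x)).
Proof.
move=> E_sym [[par_root reach_root side_inj] leafP _ nlc1 nlc2] dG dNy.
have [w [c1 [c1w yc1 dNc1 dw]]] := branching_ancestor par_root reach_root dNy.
have d_neq_w : d != w.
  apply: contraTneq dG => ->; rewrite -leafP; apply/forallPn.
  by exists c1; rewrite negbK.
have [c2 c2w dc2] := fconnect_child par_root dw d_neq_w.
have neq_c12 : c1 != c2 by apply: contraNneq dNc1 => ->.
case/andP: (c1w) => c1_nr /eqP par_c1; case/andP: (c2w) => c2_nr /eqP par_c2.
have sides : side c1 != side c2.
  by apply: contra neq_c12 => /eqP eq_s; apply/eqP/side_inj; rewrite ?par_c1 ?par_c2.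
pose through q := bt beta w y q; pose label_d := bt beta w d (alpha d).
exists (fun q => if side c1 then R w (through q) label_d else R w label_d (through q)).
move=> x xG xy; have neq_xd : x != d by apply: contraNneq dNy => <-.
have x_below_c1 : descendant par x c1 by apply/descendantP/(connect_trans xy).
have [xky yic] := (iter_findex xy, iter_findex yc1).
rewrite /through -par_c1 -(bt_through par_root reach_root nlc1 _ xky yic c1_nr) par_c1.
have d_below_c2 : descendant par d c2 by apply/descendantP.
move: sides; case s1 : (side c1); case s2 : (side c2) => // _.
- exact: nlc2 c1w c2w s1 s2 x_below_c1 d_below_c2.
- by rewrite E_sym; apply: nlc2 c2w c1w s2 s1 d_below_c2 x_below_c1; rewrite // eq_sym.
Qed.

Theorem lemma6p4 (t : nat) (N Q : finType) (VG : {set N}) (E : rel N)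
  (r : N) (par : N -> N) (side : N -> bool) (alpha : N -> Q)
  (beta : N -> N -> Q -> Q) (R : N -> rel Q) :
  symmetric E -> irreflexive E ->
  NLC_decomposition VG E r par side alpha beta R ->
  #|Q| <= t ->
  forall y : N, y != r ->
  let p := par y in
  let C := comp_minus_edge par y p :&: VG in
  let D := comp_minus_edge par p y :&: VG in
  twin_partition E C D
    (fun q => [set u in C | bt beta y u (alpha u) == q]).
Proof.
move=> E_sym _ nlc _ y y_nr p C D.
have [[par_root reach_root _] _ _ _ _] := nlc.
have C_below x : x \in C -> fconnect par x y.
  case/setIP=> xT _; rewrite (comp_minus_edge_fconnect (erefl _) xT).
  exact: connect0.
have D_not_below d : d \in D -> ~~ fconnect par d y.
  case/setIP=> dT _; rewrite (comp_minus_edge_fconnect (setUC _ _) dT).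
  exact: (fconnect_par_parent par_root reach_root y_nr).
apply: twin_partition_fibres => u v uC vC eq_uv d dD.
have [F factor] := nlc_adjacency_through_label E_sym nlc (setIP dD).2 (D_not_below d dD).
by rewrite !factor ?eq_uv ?C_below //; [case/setIP: vC | case/setIP: uC].
Qed.
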